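(* Let $(\|\cdot\|_n)_{n\in\mathbb N}$ be a sequence of norms on $\mathbb R^d$ and $(A_n)_{n\in\mathbb N}$ a sequence of invertible linear operators on $\mathbb R^d$ such that there exist $K,a>0$ with $\|\mathcal A(m,n)x\|_m\le K(m/n)^a\|x\|_n$ and $\|\mathcal A(n,m)x\|_n\le K(m/n)^a\|x\|_m$ for all $m\ge n$ in $\mathbb N$ and $x\in\mathbb R^d$. Set $B_n=\mathcal A(2^{n+1},2^n)$ for $n\ge0$. The following are equivalent: (a) $(A_n)_{n\in\mathbb N}$ admits a strong polynomial dichotomy with respect to $(\|\cdot\|_n)_{n\in\mathbb N}$; (b) $(B_n)_{n\in\mathbb Z^+}$ admits a strong exponential dichotomy with respect to $(\|\cdot\|_{2^n})_{n\in\mathbb Z^+}$.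
   Context: $\mathbb N=\{1,2,\dots\}$, $\mathbb Z^+=\{0,1,2,\dots\}$. For a sequence $(C_n)$ of invertible operators, $\mathcal C(m,n)=C_{m-1}\cdots C_n$ ($m>n$), $\mathrm{Id}$ ($m=n$), $C_m^{-1}\cdots C_{n-1}^{-1}$ ($m<n$); $\mathcal A$ is this for $(A_n)$. Strong polynomial dichotomy w.r.t. norms $(\|\cdot\|_n)_{n\in\mathbb N}$: there exist $K>0$, $a\ge\lambda>0$ and projections $P_n$ with $A_nP_n=P_{n+1}A_n$ such that for $m\ge n$, $x$, $Q_m=\mathrm{Id}-P_m$: $\|\mathcal A(m,n)P_nx\|_m\le K(m/n)^{-\lambda}\|x\|_n$, $\|\mathcal A(n,m)Q_mx\|_n\le K(m/n)^{-\lambda}\|x\|_m$, $\|\mathcal A(m,n)x\|_m\le K(m/n)^a\|x\|_n$, $\|\mathcal A(n,m)x\|_n\le K(m/n)^a\|x\|_m$. Strong exponential dichotomy w.r.t. norms $(|\cdot|_n)_{n\in\mathbb Z^+}$ for $(B_n)_{n\in\mathbb Z^+}$: there exist $K>0$, $a\ge\lambda>0$, projections $\tilde P_n$ with $B_n\tilde P_n=\tilde P_{n+1}B_n$ such that for $m\ge n$, $x$, $\tilde Q_m=\mathrm{Id}-\tilde P_m$: $|\mathcal B(m,n)\tilde P_nx|_m\le Ke^{-\lambda(m-n)}|x|_n$, $|\mathcal B(n,m)\tilde Q_mx|_n\le Ke^{-\lambda(m-n)}|x|_m$, $|\mathcal B(m,n)x|_m\le Ke^{a(m-n)}|x|_n$,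 $|\mathcal B(n,m)x|_n\le Ke^{a(m-n)}|x|_m$. *)

From HB Require Import structures.
From mathcomp Require Import all_boot all_order all_algebra.
From mathcomp Require Import all_classical all_reals all_analysis.
Set Implicit Arguments. Unset Strict Implicit. Unset Printing Implicit Defensive.
Import Order.TTheory GRing.Theory Num.Theory.
Local Open Scope ring_scope.

Section Defs.
Variables (R : realType) (d : nat).

Definition is_norm (N : 'cV[R]_d -> R) : Prop :=
  [/\ forall x, N x = 0 -> x = 0,
      forall (c : R) x, N (c *: x) = `|c| * N x &
      forall x y, N (x + y) <= N x + N y].

Fixpoint cfwd (C : nat -> 'M[R]_d) (n k : nat) : 'M[R]_d :=
  match k with
  | 0 => 1%:M
  | k'.+1 => C (n + k')%N *m cfwd C n k'
  end.

Fixpoint cbwd (C : nat -> 'M[R]_d) (m k : nat) : 'M[R]_d :=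
  match k with
  | 0 => 1%:M
  | k'.+1 => cbwd C m k' *m invmx (C (m + k')%N)
  end.

(* cocycle: cocycle C m n = C_(m-1)...C_n (m>n), Id (m=n), C_m^{-1}...C_(n-1)^{-1} (m<n) *)
Definition cocycle (C : nat -> 'M[R]_d) (m n : nat) : 'M[R]_d :=
  if (n <= m)%N then cfwd C n (m - n) else cbwd C m (n - m).

Definition is_proj (P : 'M[R]_d) : Prop := P *m P = P.

Definition strong_poly_dichotomy (A : nat -> 'M[R]_d) (N : nat -> 'cV[R]_d -> R) : Prop :=
  exists (K a lam : R) (P : nat -> 'M[R]_d),
    [/\ 0 < K, 0 < lam, lam <= a,
        (forall n, (1 <= n)%N -> is_proj (P n)) &
        (forall n, (1 <= n)%N -> A n *m P n = P n.+1 *m A n)] /\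
        forall m n, (1 <= n)%N -> (n <= m)%N -> forall x : 'cV[R]_d,
          [/\ N m (cocycle A m n *m (P n *m x)) <= K * powR (m%:R / n%:R) (- lam) * N n x,
              N n (cocycle A n m *m ((1%:M - P m) *m x)) <= K * powR (m%:R / n%:R) (- lam) * N m x,
              N m (cocycle A m n *m x) <= K * powR (m%:R / n%:R) a * N n x &
              N n (cocycle A n m *m x) <= K * powR (m%:R / n%:R) a * N m x].

Definition strong_exp_dichotomy (B : nat -> 'M[R]_d) (N : nat -> 'cV[R]_d -> R) : Prop :=
  exists (K a lam : R) (P : nat -> 'M[R]_d),
    [/\ 0 < K, 0 < lam, lam <= a,
        (forall n, is_proj (P n)) &
        (forall n, B n *m P n = P n.+1 *m B n)] /\
        forall m n, (n <= m)%N -> forall x : 'cV[R]_d,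
          [/\ N m (cocycle B m n *m (P n *m x)) <= K * expR (- lam * (m - n)%:R) * N n x,
              N n (cocycle B n m *m ((1%:M - P m) *m x)) <= K * expR (- lam * (m - n)%:R) * N m x,
              N m (cocycle B m n *m x) <= K * expR (a * (m - n)%:R) * N n x &
              N n (cocycle B n m *m x) <= K * expR (a * (m - n)%:R) * N m x].

End Defs.

From HB Require Import structures.
From mathcomp Require Import all_boot all_order all_algebra.
From mathcomp Require Import all_classical all_reals all_analysis.
From mathcomp Require Import ring lra.
Set Implicit Arguments. Unset Strict Implicit. Unset Printing Implicit Defensive.
Import Order.TTheory GRing.Theory Num.Theory.
Local Open Scope ring_scope.

(* With Phi(k) = A(k,1) one has A(m,n) = Phi(m) Phi(n)^-1, so the cocycle of B_j = A(2^(j+1),2^j)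
   is just A restricted to the times 2^j, and (2^i/2^j)^c = e^(c ln 2 (i-j)): a polynomial
   dichotomy restricts to an exponential one for B, with rates multiplied by ln 2.
   Conversely, transport the projection P_0 of the dichotomy of B along the cocycle,
   Q_k = A(k,1) P_0 A(1,k), so that Q_(2^j) = P_j. For 2^p <= n <= m < 2^(q+1),
   A(m,n) Q_n = A(m,2^q) B(q,p) P_p A(2^p,n): the outer factors stay inside a single dyadic
   block, where the bounded growth hypothesis costs at most the constant K 2^a, and
   e^(-lam (q-p)) <= e^lam (m/n)^(-lam/ln 2). The unstable part is handled symmetrically. *)

Lemma invmxM (R : comUnitRingType) n (A B : 'M[R]_n) :
  A \in unitmx -> B \in unitmx -> invmx (A *m B) = invmx B *m invmx A.
Proof.
move=> uA uB; have uAB : A *m B \in unitmx by rewrite unitmx_mul uA uB.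
by rewrite -[RHS]mul1mx -(mulVmx uAB) -!mulmxA (mulmxA B) (mulmxV uB) mul1mx
  (mulmxV uA) mulmx1.
Qed.

Section Cocycles.
Variables (R : realType) (d : nat).
Implicit Types (C A P : nat -> 'M[R]_d).

Lemma cocycle_id C n : cocycle C n n = 1%:M.
Proof. by rewrite /cocycle leqnn subnn. Qed.

Lemma cocycle_succ C n : cocycle C n.+1 n = C n.
Proof. by rewrite /cocycle leqnSn subSnn /= addn0 mulmx1. Qed.

Section Fundamental.
Variables (C Psi : nat -> 'M[R]_d) (k0 : nat).
Hypothesis Psi_unit : forall k, (k0 <= k)%N -> Psi k \in unitmx.
Hypothesis C_Psi : forall k, (k0 <= k)%N -> C k = Psi k.+1 *m invmx (Psi k).

Lemma cocycle_fundamental m n : (k0 <= m)%N -> (k0 <= n)%N ->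
  cocycle C m n = Psi m *m invmx (Psi n).
Proof.
have fwd j k : (k0 <= j)%N -> cfwd C j k = Psi (j + k)%N *m invmx (Psi j).
  move=> hn; elim: k => [|k IH] /=; first by rewrite addn0 mulmxV ?Psi_unit.
  have hnk : (k0 <= j + k)%N by rewrite (leq_trans hn) ?leq_addr.
  by rewrite IH C_Psi // mulmxA mulmxKV ?Psi_unit // addnS.
have bwd j k : (k0 <= j)%N -> cbwd C j k = Psi j *m invmx (Psi (j + k)%N).
  move=> hm; elim: k => [|k IH] /=; first by rewrite addn0 mulmxV ?Psi_unit.
  have hmk : (k0 <= j + k)%N by rewrite (leq_trans hm) ?leq_addr.
  rewrite IH C_Psi // invmxM ?unitmx_inv ?Psi_unit ?(leq_trans hmk) //.
  by rewrite invmxK mulmxA mulmxKV ?Psi_unit // addnS.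
move=> hm hn; rewrite /cocycle; case: leqP => h; first by rewrite fwd // subnKC.
by rewrite bwd // subnKC // ltnW.
Qed.

Lemma cocycle_trans m k n : (k0 <= m)%N -> (k0 <= k)%N -> (k0 <= n)%N ->
  cocycle C m k *m cocycle C k n = cocycle C m n.
Proof.
by move=> hm hk hn; rewrite !cocycle_fundamental // mulmxA mulmxKV ?Psi_unit.
Qed.

Lemma cocycle_invariant P :
  (forall k, (k0 <= k)%N -> C k *m P k = P k.+1 *m C k) ->
  forall m n, (k0 <= m)%N -> (k0 <= n)%N ->
  cocycle C m n *m P n = P m *m cocycle C m n.
Proof.
move=> hP.
pose conjP k := invmx (Psi k) *m P k *m Psi k.
have conjP_const k : (k0 <= k)%N -> conjP k = conjP k0.
  move=> /subnKC <-; elim: (k - k0)%N => [|i IH]; first by rewrite addn0.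
  have hk : (k0 <= k0 + i)%N by rewrite leq_addr.
  rewrite -IH /conjP addnS; set j := (k0 + i)%N.
  have PsiS : P j.+1 *m Psi j.+1 = Psi j.+1 *m (invmx (Psi j) *m P j *m Psi j).
    rewrite -{1}(mulmxKV (Psi_unit hk) (Psi j.+1)) -C_Psi // mulmxA -hP //.
    by rewrite C_Psi // !mulmxA.
  by rewrite -mulmxA PsiS mulmxA mulVmx ?Psi_unit ?(leq_trans hk) // mul1mx.
move=> m n hm hn; rewrite !cocycle_fundamental //.
have PE k : (k0 <= k)%N -> P k = Psi k *m conjP k *m invmx (Psi k).
  by move=> hk; rewrite /conjP !mulmxA mulmxV ?Psi_unit // mul1mx mulmxK ?Psi_unit.
by rewrite (PE n) // (PE m) // (conjP_const n) // (conjP_const m) // !mulmxA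
  !mulmxKV ?Psi_unit.
Qed.

End Fundamental.

(* [fundamental A k] is A(k,1) for k >= 1; its value at k = 0 is irrelevant. *)
Definition fundamental A k := cfwd A 1 k.-1.

Definition dyadic A j := cocycle A (2 ^ j.+1) (2 ^ j).

Section FundamentalMatrix.
Variable A : nat -> 'M[R]_d.
Hypothesis A_unit : forall n, (1 <= n)%N -> A n \in unitmx.

Lemma fundamental_unit k : (0 < k)%N -> fundamental A k \in unitmx.
Proof.
elim: k => // [[_ _|k IH _]]; first by rewrite unitmx1.
by rewrite /fundamental /= unitmx_mul A_unit ?IH.
Qed.

Lemma fundamentalE k : (0 < k)%N -> A k = fundamental A k.+1 *m invmx (fundamental A k).
Proof.
case: k => // k _.
rewrite [fundamental A k.+2]/fundamental /= -/(fundamental A k.+1).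
by rewrite mulmxK ?fundamental_unit.
Qed.

Lemma cocycleE m n : (0 < m)%N -> (0 < n)%N ->
  cocycle A m n = fundamental A m *m invmx (fundamental A n).
Proof. exact: (cocycle_fundamental (k0 := 1) fundamental_unit fundamentalE). Qed.

Lemma dyadic_fundamental_unit j : fundamental A (2 ^ j) \in unitmx.
Proof. by rewrite fundamental_unit ?expn_gt0. Qed.

Lemma dyadicE j : dyadic A j = fundamental A (2 ^ j.+1) *m invmx (fundamental A (2 ^ j)).
Proof. by rewrite /dyadic cocycleE ?expn_gt0. Qed.

Lemma cocycle_dyadic m n : cocycle (dyadic A) m n = cocycle A (2 ^ m) (2 ^ n).
Proof.
rewrite (cocycle_fundamental (k0 := 0) (fun j _ => dyadic_fundamental_unit j)
  (fun j _ => dyadicE j)) //.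
by rewrite cocycleE ?expn_gt0.
Qed.

End FundamentalMatrix.
End Cocycles.

Lemma is_norm_ge0 (R : realType) d (N : 'cV[R]_d -> R) x : is_norm N -> 0 <= N x.
Proof.
case=> _ hZ hD; have N0 : N 0 = 0 by rewrite -(scale0r x) hZ normr0 mul0r.
have NN : N (- x) = N x by rewrite -scaleN1r hZ normrN normr1 mul1r.
by have := hD x (- x); rewrite subrr N0 NN; lra.
Qed.

Lemma le_chain3 (R : numDomainType) (X Y Z V al be ga T : R) :
  0 <= al -> 0 <= be -> 0 <= V -> al * be * ga <= T ->
  X <= al * Y -> Y <= be * Z -> Z <= ga * V -> X <= T * V.
Proof.
move=> al0 be0 V0 hT hX hY hZ; apply: (le_trans hX).
apply: (le_trans (ler_wpM2l al0 hY)); rewrite mulrA.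
by apply: (le_trans (ler_wpM2l (mulr_ge0 al0 be0) hZ)); rewrite mulrA ler_wpM2r.
Qed.

Section DyadicScale.
Variable R : realType.

Lemma ln2_gt0 : 0 < ln (2 : R).
Proof. by apply: ln_gt0; lra. Qed.

Lemma powR_dyadic (m n : nat) (c : R) : (n <= m)%N ->
  powR ((2 ^ m)%:R / (2 ^ n)%:R) c = expR (c * ln 2 * (m - n)%:R).
Proof.
move=> h; rewrite -(subnKC h) addKn expnD natrM mulrAC mulfV; last first.
  by rewrite pnatr_eq0 -lt0n expn_gt0.
rewrite mul1r /powR gt_eqF ?ltr0n ?expn_gt0 //.
by rewrite natrX lnXn // -[_ *+ _]mulr_natr mulrA.
Qed.

Lemma powR_dyadic_block_le (q m : nat) (c : R) : 0 <= c ->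
  (2 ^ q <= m < 2 ^ q.+1)%N -> powR (m%:R / (2 ^ q)%:R) c <= powR 2 c.
Proof.
move=> c0 /andP[hq1 hq2]; have q0 : (0 : R) < (2 ^ q)%:R by rewrite ltr0n expn_gt0.
apply: ge0_ler_powR; rewrite ?nnegrE ?divr_ge0 ?ler0n //.
by rewrite ler_pdivrMr // -natrM ler_nat -expnS ltnW.
Qed.

Lemma expR_dyadic_gap_le (lam : R) (m n p q : nat) : 0 < lam ->
  (2 ^ p <= n)%N -> (n <= m)%N -> (m < 2 ^ q.+1)%N ->
  expR (- lam * (q - p)%:R) <= expR lam * powR (m%:R / n%:R) (- (lam / ln 2)).
Proof.
move=> lam0 hpn hnm hmq.
have hpq : (p <= q)%N.
  rewrite -ltnS -(ltn_exp2l _ _ (isT : (1 < 2)%N)).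
  by rewrite (leq_ltn_trans hpn) ?(leq_ltn_trans hnm).
have n0 : (0 < n)%N by rewrite (leq_trans _ hpn) ?expn_gt0.
have n0' : (0 : R) < n%:R by rewrite ltr0n.
have m0' : (0 : R) < m%:R by rewrite ltr0n (leq_trans n0 hnm).
have L := ln2_gt0.
have ln_m : ln (m%:R : R) <= ln 2 * q.+1%:R.
  rewrite mulr_natr -lnXn; last lra.
  by rewrite ler_ln ?posrE ?exprn_gt0 // -natrX ler_nat ltnW.
have ln_n : ln 2 * p%:R <= ln (n%:R : R).
  rewrite mulr_natr -lnXn; last lra.
  by rewrite ler_ln ?posrE ?exprn_gt0 // -natrX ler_nat.
rewrite /powR gt_eqF ?divr_gt0 // -expRD ler_expR ln_div ?posrE //.
set t := (ln (m%:R : R) - ln n%:R) / ln 2.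
have ht : t <= q.+1%:R - p%:R by rewrite /t ler_pdivrMr //; lra.
have -> : - (lam / ln 2) * (ln m%:R - ln n%:R) = - (lam * t).
  by rewrite /t mulrA mulNr mulrAC.
have : lam * t <= lam * (q.+1%:R - p%:R) by rewrite ler_pM2l.
by rewrite natrB // -addn1 natrD; lra.
Qed.

Lemma dyadic_index n : (0 < n)%N ->
  (2 ^ trunc_log 2 n <= n < 2 ^ (trunc_log 2 n).+1)%N.
Proof. by move=> n0; rewrite trunc_logP ?trunc_log_ltn. Qed.

End DyadicScale.

Lemma poly_to_dyadic_dichotomy (R : realType) d (N : nat -> 'cV[R]_d -> R)
    (A : nat -> 'M[R]_d) :
  (forall n, (1 <= n)%N -> A n \in unitmx) -> strong_poly_dichotomy A N ->
  strong_exp_dichotomy (dyadic A) (fun n => N (2 ^ n)%N).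
Proof.
move=> A_unit [K [a [lam [P [[K_gt0 lam_gt0 lam_le P_proj P_invariant] bounds]]]]].
have ln2_pos := @ln2_gt0 R.
exists K, (a * ln 2), (lam * ln 2), (fun j => P (2 ^ j)%N); split.
  split => //; first by rewrite mulr_gt0.
  - by rewrite ler_wpM2r ?(ltW ln2_pos).
  - by move=> j; apply: P_proj; rewrite expn_gt0.
  - move=> j; rewrite /dyadic.
    by rewrite (cocycle_invariant (fundamental_unit A_unit) (fundamentalE A_unit))
      ?expn_gt0.
move=> m n hnm x; rewrite !(cocycle_dyadic A_unit).
have [] := bounds _ _ (expn_gt0 2 n) (@leq_pexp2l 2 _ _ isT hnm) x.
by rewrite !powR_dyadic // !mulNr.
Qed.

Section DyadicToPolynomial.
Variables (R : realType) (d : nat) (N : nat -> 'cV[R]_d -> R) (A : nat -> 'M[R]_d).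
Hypothesis N_norm : forall n, (1 <= n)%N -> is_norm (N n).
Hypothesis A_unit : forall n, (1 <= n)%N -> A n \in unitmx.
Variables (Kg ag : R).
Hypotheses (Kg_gt0 : 0 < Kg) (ag_gt0 : 0 < ag).
Hypothesis A_growth : forall m n, (1 <= n)%N -> (n <= m)%N -> forall x,
  N m (cocycle A m n *m x) <= Kg * powR (m%:R / n%:R) ag * N n x /\
  N n (cocycle A n m *m x) <= Kg * powR (m%:R / n%:R) ag * N m x.
Variables (K lam : R) (P : nat -> 'M[R]_d).
Hypotheses (K_gt0 : 0 < K) (lam_gt0 : 0 < lam).
Hypothesis P_proj : forall j, is_proj (P j).
Hypothesis P_invariant : forall j, dyadic A j *m P j = P j.+1 *m dyadic A j.
Hypothesis P_stable : forall i j, (j <= i)%N -> forall x,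
  N (2 ^ i) (cocycle (dyadic A) i j *m (P j *m x))
    <= K * expR (- lam * (i - j)%:R) * N (2 ^ j) x.
Hypothesis P_unstable : forall i j, (j <= i)%N -> forall x,
  N (2 ^ j) (cocycle (dyadic A) j i *m ((1%:M - P i) *m x))
    <= K * expR (- lam * (i - j)%:R) * N (2 ^ i) x.

Let cocycleA_trans := cocycle_trans (fundamental_unit A_unit) (fundamentalE A_unit).
Let dyadic_unit j (_ : (0 <= j)%N) := dyadic_fundamental_unit A_unit j.
Let dyadic_fundamental j (_ : (0 <= j)%N) := dyadicE A_unit j.
Let cocycle_dyadic_trans := cocycle_trans dyadic_unit dyadic_fundamental.

Local Notation c := (Kg * powR 2 ag).

Let c_ge0 : 0 <= c := mulr_ge0 (ltW Kg_gt0) (powR_ge0 _ _).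

Lemma dyadic_block_growth q m y : (2 ^ q <= m < 2 ^ q.+1)%N ->
  N m (cocycle A m (2 ^ q) *m y) <= c * N (2 ^ q) y /\
  N (2 ^ q) (cocycle A (2 ^ q) m *m y) <= c * N m y.
Proof.
move=> hqm; have /andP[hq _] := hqm.
have [growth_fwd growth_bwd] := A_growth (expn_gt0 2 q) hq y.
have hc := powR_dyadic_block_le (ltW ag_gt0) hqm.
have c_le z : 0 <= z -> Kg * powR (m%:R / (2 ^ q)%:R) ag * z <= c * z.
  by move=> z0; rewrite ler_wpM2r // ler_wpM2l // ltW.
have m0 : (0 < m)%N by rewrite (leq_trans _ hq) ?expn_gt0.
split; [apply: le_trans growth_fwd _ | apply: le_trans growth_bwd _];
  by apply: c_le; apply: is_norm_ge0; apply: N_norm; rewrite ?expn_gt0.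
Qed.

Definition transported_proj k := cocycle A k 1 *m P 0 *m cocycle A 1 k.

Lemma transported_proj_dyadic j : transported_proj (2 ^ j) = P j.
Proof.
rewrite /transported_proj -[1%N]/(2 ^ 0)%N -!(cocycle_dyadic A_unit).
rewrite (cocycle_invariant dyadic_unit dyadic_fundamental) //.
by rewrite -mulmxA cocycle_dyadic_trans // cocycle_id mulmx1.
Qed.

Lemma transported_proj_idem k : (0 < k)%N -> is_proj (transported_proj k).
Proof.
move=> k0; rewrite /is_proj /transported_proj !mulmxA -(mulmxA _ (cocycle A 1 k)).
rewrite cocycleA_trans // cocycle_id mulmx1.
by rewrite -(mulmxA _ (P 0) (P 0)) (P_proj 0).
Qed.

Lemma transported_proj_invariant k : (0 < k)%N ->
  A k *m transported_proj k = transported_proj k.+1 *m A k.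
Proof.
move=> k0; rewrite /transported_proj -(cocycle_succ A k) !mulmxA.
by rewrite cocycleA_trans // -(mulmxA _ (cocycle A 1 k.+1)) cocycleA_trans.
Qed.

Lemma transported_projC k : (0 < k)%N ->
  1%:M - transported_proj k = cocycle A k 1 *m (1%:M - P 0) *m cocycle A 1 k.
Proof.
by move=> k0; rewrite mulmxBr mulmxBl mulmx1 cocycleA_trans ?cocycle_id.
Qed.

Local Notation Kd := (c * (K * expR lam) * c).
Local Notation mu := (lam / ln 2).

Lemma dyadic_constant_le m n p q : (2 ^ p <= n)%N -> (n <= m)%N -> (m < 2 ^ q.+1)%N ->
  c * (K * expR (- lam * (q - p)%:R)) * c <= Kd * powR (m%:R / n%:R) (- mu).
Proof.
move=> hpn hnm hmq.
rewrite [leRHS](_ : _ = c * (K * (expR lam * powR (m%:R / n%:R) (- mu))) * c); last by ring.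
by rewrite ler_wpM2r // ler_wpM2l // ler_wpM2l ?(ltW K_gt0) ?expR_dyadic_gap_le.
Qed.

Lemma transported_proj_stable m n x : (0 < n)%N -> (n <= m)%N ->
  N m (cocycle A m n *m (transported_proj n *m x))
    <= Kd * powR (m%:R / n%:R) (- mu) * N n x.
Proof.
move=> n0 hnm; have m0 : (0 < m)%N := leq_trans n0 hnm.
have hp := dyadic_index n0; have hq := dyadic_index m0.
set p := trunc_log 2 n in hp *; set q := trunc_log 2 m in hq *.
have hpq : (p <= q)%N by apply: leq_trunc_log.
have -> : cocycle A m n *m (transported_proj n *m x) = cocycle A m (2 ^ q) *m
    (cocycle (dyadic A) q p *m (P p *m (cocycle A (2 ^ p) n *m x))).
  rewrite (cocycle_dyadic A_unit) -transported_proj_dyadic /transported_proj.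
  rewrite !mulmxA !cocycleA_trans ?expn_gt0 //.
  by rewrite -(mulmxA _ (cocycle A 1 (2 ^ p))) cocycleA_trans ?expn_gt0.
have [/andP[hpn _] /andP[_ hmq]] := (hp, hq).
apply: (le_chain3 c_ge0 _ _ (dyadic_constant_le hpn hnm hmq))
  (dyadic_block_growth _ hq).1 (P_stable hpq _) (dyadic_block_growth _ hp).2.
- by rewrite mulr_ge0 ?expR_ge0 ?ltW.
- exact/is_norm_ge0/N_norm.
Qed.

Lemma transported_proj_unstable m n x : (0 < n)%N -> (n <= m)%N ->
  N n (cocycle A n m *m ((1%:M - transported_proj m) *m x))
    <= Kd * powR (m%:R / n%:R) (- mu) * N m x.
Proof.
move=> n0 hnm; have m0 : (0 < m)%N := leq_trans n0 hnm.
have hp := dyadic_index n0; have hq := dyadic_index m0.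
set p := trunc_log 2 n in hp *; set q := trunc_log 2 m in hq *.
have hpq : (p <= q)%N by apply: leq_trunc_log.
have -> : cocycle A n m *m ((1%:M - transported_proj m) *m x) = cocycle A n (2 ^ p) *m
    (cocycle (dyadic A) p q *m ((1%:M - P q) *m (cocycle A (2 ^ q) m *m x))).
  rewrite (cocycle_dyadic A_unit) -transported_proj_dyadic !transported_projC ?expn_gt0 //.
  rewrite !mulmxA !cocycleA_trans ?expn_gt0 //.
  by rewrite -(mulmxA _ (cocycle A 1 (2 ^ q))) cocycleA_trans ?expn_gt0.
have [/andP[hpn _] /andP[_ hmq]] := (hp, hq).
apply: (le_chain3 c_ge0 _ _ (dyadic_constant_le hpn hnm hmq))
  (dyadic_block_growth _ hp).1 (P_unstable hpq _) (dyadic_block_growth _ hq).2.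
- by rewrite mulr_ge0 ?expR_ge0 ?ltW.
- exact/is_norm_ge0/N_norm.
Qed.

Lemma dyadic_to_poly_dichotomy : strong_poly_dichotomy A N.
Proof.
have ln2_pos := @ln2_gt0 R; have mu_gt0 : 0 < mu by rewrite divr_gt0.
have Kd_ge0 : 0 <= Kd by rewrite !mulr_ge0 ?expR_ge0 ?ltW.
exists (Kg + Kd), (ag + mu), mu, transported_proj; split.
  split => //.
  - by rewrite (lt_le_trans Kg_gt0) // lerDl.
  - by rewrite lerDr ltW.
  - exact: transported_proj_idem.
  - exact: transported_proj_invariant.
move=> m n n0 hnm x; have [growth_fwd growth_bwd] := A_growth n0 hnm x.
have ratio_ge1 : 1 <= (m%:R / n%:R : R) by rewrite ler_pdivlMr ?ltr0n // mul1r ler_nat.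
have le_const k (C e e' : R) : (0 < k)%N -> 0 <= C <= Kg + Kd -> e <= e' ->
    C * powR (m%:R / n%:R) e * N k x <= (Kg + Kd) * powR (m%:R / n%:R) e' * N k x.
  move=> k0 /andP[C0 hC] he; rewrite ler_wpM2r //; first exact/is_norm_ge0/N_norm.
  by rewrite ler_pM ?powR_ge0 ?ler_powR.
have Kd_le : 0 <= Kd <= Kg + Kd by rewrite Kd_ge0 lerDr ltW.
have Kg_le : 0 <= Kg <= Kg + Kd by rewrite ltW // lerDl.
have m0 : (0 < m)%N := leq_trans n0 hnm.
split.
- exact: le_trans (transported_proj_stable x n0 hnm) (le_const _ _ _ _ n0 Kd_le (lexx _)).
- exact: le_trans (transported_proj_unstable x n0 hnm) (le_const _ _ _ _ m0 Kd_le (lexx _)).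
- by apply: le_trans growth_fwd (le_const _ _ _ _ n0 Kg_le _); rewrite lerDl ltW.
- by apply: le_trans growth_bwd (le_const _ _ _ _ m0 Kg_le _); rewrite lerDl ltW.
Qed.

End DyadicToPolynomial.

Theorem proposition2p3 (R : realType) (d : nat)
  (N : nat -> 'cV[R]_d -> R) (A : nat -> 'M[R]_d)
  (hN : forall n, (1 <= n)%N -> is_norm (N n))
  (hA : forall n, (1 <= n)%N -> A n \in unitmx)
  (hgrowth : exists K a : R, [/\ 0 < K, 0 < a &
     forall m n, (1 <= n)%N -> (n <= m)%N -> forall x : 'cV[R]_d,
       N m (cocycle A m n *m x) <= K * powR (m%:R / n%:R) a * N n x /\
       N n (cocycle A n m *m x) <= K * powR (m%:R / n%:R) a * N m x]) :
  strong_poly_dichotomy A N <->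
  strong_exp_dichotomy (fun n => cocycle A (2 ^ n.+1) (2 ^ n)) (fun n => N (2 ^ n)%N).
Proof.
split; first exact: poly_to_dyadic_dichotomy.
have [Kg [ag [Kg_gt0 ag_gt0 growth]]] := hgrowth.
case=> [K [a [lam [P [[K_gt0 lam_gt0 _ P_proj P_invariant] bounds]]]]].
apply: (dyadic_to_poly_dichotomy hN hA Kg_gt0 ag_gt0 growth K_gt0 lam_gt0 P_proj
  P_invariant) => i j hji x; by have [] := bounds i j hji x.
Qed.
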